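(* Let $L$ be a normalised lattice in $\mathrm{Osc}_1$, $r=r(L)$, $q=\operatorname{ord}(\lambda(L))$. There exists $S\in\mathrm{SO}(2)$ (acting on $\mathbb C\cong\mathbb R^2$) such that $F_S(L)$, where $F_S(\xi,z,t)=(S\xi,z,t)$, is generated by elements $\alpha=(\tfrac1{\sqrt\nu},z_\alpha,0)$, $\beta=(-\tfrac{\mu}{\sqrt\nu}+i\sqrt\nu,z_\beta,0)$, $\gamma=(0,\tfrac1r,0)$ and some $\delta$, for suitable $z_\alpha,z_\beta\in\mathbb R$ and suitable $(\mu,\nu)\in\mathcal F$. If $q=4$ then $\mu+i\nu=i$, and if $q\in\{3,6\}$ then $\mu+i\nu=e^{\pi i/3}$. If moreover $\delta\in F_S(L)$ is chosen so that its projection to the $\mathbb R$-factor equals $\lambda(L)$, then $\alpha,\beta,\gamma,\delta$ are adapted generators of $F_S(L)$.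
   Context: $\mathrm{Osc}_1$ is the set $\mathbb C\times\mathbb R\times\mathbb R$ with multiplication $(\xi_1,z_1,t_1)(\xi_2,z_2,t_2)=(\xi_1+e^{it_1}\xi_2,\ z_1+z_2+\tfrac12\operatorname{Im}(\overline{\xi_1}e^{it_1}\xi_2),\ t_1+t_2)$; $H=\mathbb C\times\mathbb R\times\{0\}$, $Z(H)=\{0\}\times\mathbb R\times\{0\}$. For a lattice $L$: $L\cap H\cong H_1^r(\mathbb Z)=\langle\alpha,\beta,\gamma\mid\alpha\beta\alpha^{-1}\beta^{-1}=\gamma^r,\gamma\text{ central}\rangle$ for a unique $r=r(L)$; the projection of $L$ to the last factor is generated by a unique $\lambda(L)\in\pi\mathbb N_{>0}\cup\bigcup_{\lambda_0\in\{\pi/3,\pi/2,2\pi/3\}}(\lambda_0+2\pi\mathbb Z)$, and $\operatorname{ord}(\lambda)$ is the least $q\ge1$ with $q\lambda\in2\pi\mathbb Z$. $L$ is normalised if the projection of $L\cap H$ to $H/Z(H)\cong\mathbb C$ has covolume one. $\mathcal F=\{(\mu,\nu):\nu>0,\ \mu\in[0,\tfrac12],\ \mu^2+\nu^2\ge1\}\cup\{(\mu,\nu):\nu>0,\ \mu\in(-\tfrac12,0),\ \mu^2+\nu^2>1\}$, identified with $\mu+i\nu$. Generators $\alpha,\beta,\gamma,\delta$ of $L$ are adapted if: the $\mathbb R$-component of $\delta$ is $\lambda(L)$; $\alpha,\beta,\gamma$ generate $L\cap H$ with $\gamma$ central and $\alpha\beta\alpha^{-1}\beta^{-1}=\gamma^r$;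 the matrix of the automorphism induced by conjugation with $\delta$ on $(L\cap H)/Z(L\cap H)\cong\mathbb Z^2$ (basis: classes of $\alpha,\beta$) is one of $I_2,-I_2,\begin{pmatrix}0&-1\\1&-1\end{pmatrix},\begin{pmatrix}0&-1\\1&0\end{pmatrix},\begin{pmatrix}1&-1\\1&0\end{pmatrix}$; and the projections of $\alpha,\beta$ to $\mathbb C\cong\mathbb R^2$ form a positively oriented basis. *)

From Stdlib Require Import Reals ZArith.
Open Scope R_scope.

(* An element (xi, z, t) of Osc_1 = C x R x R, with xi = xr + i xi. *)
Record Osc := mkOsc { xr : R; xim : R; zc : R; tc : R }.

Definition osc_id : Osc := mkOsc 0 0 0 0.

(* (xi1,z1,t1)(xi2,z2,t2) = (xi1 + e^{it1} xi2, z1+z2+1/2 Im(conj xi1 e^{it1} xi2), t1+t2) *)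
Definition osc_mul (g h : Osc) : Osc :=
  let wr := cos (tc g) * xr h - sin (tc g) * xim h in
  let wi := sin (tc g) * xr h + cos (tc g) * xim h in
  mkOsc (xr g + wr) (xim g + wi)
        (zc g + zc h + / 2 * (xr g * wi - xim g * wr))
        (tc g + tc h).

(* inverse: (xi,z,t)^{-1} = (-e^{-it} xi, -z, -t) *)
Definition osc_inv (g : Osc) : Osc :=
  mkOsc (- (cos (tc g) * xr g + sin (tc g) * xim g))
        (- (- sin (tc g) * xr g + cos (tc g) * xim g))
        (- zc g) (- tc g).

Fixpoint osc_pow (g : Osc) (n : nat) : Osc :=
  match n with O => osc_id | S n' => osc_mul g (osc_pow g n') end.

Definition osc_zpow (g : Osc) (k : Z) : Osc :=
  match k with
  | Z0 => osc_id
  | Zpos p => osc_pow g (Pos.to_nat p)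
  | Zneg p => osc_inv (osc_pow g (Pos.to_nat p))
  end.

Definition osc_norm (g : Osc) : R :=
  Rmax (Rmax (Rabs (xr g)) (Rabs (xim g))) (Rmax (Rabs (zc g)) (Rabs (tc g))).

Definition subgroup (L : Osc -> Prop) : Prop :=
  L osc_id /\ (forall g h, L g -> L h -> L (osc_mul g h)) /\
  (forall g, L g -> L (osc_inv g)).

Definition discrete (L : Osc -> Prop) : Prop :=
  exists eps, 0 < eps /\ forall g, L g -> osc_norm g < eps -> g = osc_id.

(* cocompact: Osc_1 = L K for some compact (equivalently, bounded) set K *)
Definition cocompact (L : Osc -> Prop) : Prop :=
  exists M, forall g, exists l k, L l /\ osc_norm k <= M /\ g = osc_mul l k.

Definition lattice (L : Osc -> Prop) : Prop :=
  subgroup L /\ discrete L /\ cocompact L.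

(* L ∩ H, H = C x R x {0} *)
Definition inH (L : Osc -> Prop) (g : Osc) : Prop := L g /\ tc g = 0.

(* Concrete model of H_1^r(Z) = <a,b,c | [a,b] = c^r, c central>:
   Z^3 with (a,b,c)(a',b',c') = (a+a', b+b', c+c'+r a b'). *)
Definition heis_mul (r : Z) (x y : Z * Z * Z) : Z * Z * Z :=
  let '(a, b, c) := x in let '(a', b', c') := y in
  ((a + a')%Z, (b + b')%Z, (c + c' + r * a * b')%Z).

Definition heis_type (L : Osc -> Prop) (r : nat) : Prop :=
  (0 < r)%nat /\
  exists phi : Z * Z * Z -> Osc,
    (forall x y, phi (heis_mul (Z.of_nat r) x y) = osc_mul (phi x) (phi y)) /\
    (forall x y, phi x = phi y -> x = y) /\
    (forall g, inH L g <-> exists x, phi x = g).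

Definition lambda_set (l : R) : Prop :=
  (exists n : nat, (0 < n)%nat /\ l = INR n * PI) \/
  (exists (l0 : R) (k : Z),
      (l0 = PI / 3 \/ l0 = PI / 2 \/ l0 = 2 * PI / 3) /\ l = l0 + 2 * PI * IZR k).

Definition lambda_of (L : Osc -> Prop) (l : R) : Prop :=
  lambda_set l /\
  forall t, (exists g, L g /\ tc g = t) <-> (exists k : Z, t = IZR k * l).

Definition in_2piZ (x : R) : Prop := exists k : Z, x = 2 * PI * IZR k.
Definition is_ord (l : R) (q : nat) : Prop :=
  (1 <= q)%nat /\ in_2piZ (INR q * l) /\
  forall q', (1 <= q')%nat -> (q' < q)%nat -> ~ in_2piZ (INR q' * l).

(* normalised: projection of L ∩ H to H/Z(H) = C has covolume one *)
Definition normalised (L : Osc -> Prop) : Prop :=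
  exists u1 u2 v1 v2 : R,
    (forall w1 w2, (exists g, inH L g /\ xr g = w1 /\ xim g = w2) <->
       (exists m n : Z, w1 = IZR m * u1 + IZR n * v1 /\ w2 = IZR m * u2 + IZR n * v2)) /\
    Rabs (u1 * v2 - u2 * v1) = 1.

Definition in_F (mu nu : R) : Prop :=
  (0 < nu /\ 0 <= mu <= / 2 /\ 1 <= mu ^ 2 + nu ^ 2) \/
  (0 < nu /\ - / 2 < mu < 0 /\ 1 < mu ^ 2 + nu ^ 2).

(* S in SO(2) given as (c, s) with c^2+s^2 = 1 : S = [[c,-s],[s,c]];
   F_S(xi,z,t) = (S xi, z, t) *)
Definition in_SO2 (c s : R) : Prop := c ^ 2 + s ^ 2 = 1.
Definition F_S (c s : R) (g : Osc) : Osc :=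
  mkOsc (c * xr g - s * xim g) (s * xr g + c * xim g) (zc g) (tc g).
Definition image_FS (c s : R) (L : Osc -> Prop) (g : Osc) : Prop :=
  exists h, L h /\ g = F_S c s h.

Inductive gen (X : Osc -> Prop) : Osc -> Prop :=
| gen_id : gen X osc_id
| gen_base : forall x, X x -> gen X x
| gen_mul : forall x y, gen X x -> gen X y -> gen X (osc_mul x y)
| gen_inv : forall x, gen X x -> gen X (osc_inv x).

Definition set3 (a b c : Osc) (x : Osc) : Prop := x = a \/ x = b \/ x = c.
Definition set4 (a b c d : Osc) (x : Osc) : Prop := x = a \/ x = b \/ x = c \/ x = d.

Definition generates (L : Osc -> Prop) (a b c d : Osc) : Prop :=
  forall g, L g <-> gen (set4 a b c d) g.

Definition in_center_LH (L : Osc -> Prop) (g : Osc) : Prop :=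
  inH L g /\ forall h, inH L h -> osc_mul g h = osc_mul h g.

(* x and y have the same class in (L∩H)/Z(L∩H) *)
Definition same_class (L : Osc -> Prop) (x y : Osc) : Prop :=
  in_center_LH L (osc_mul (osc_inv y) x).

(* the matrix [[m11,m12],[m21,m22]] (columns = images of the basis [a],[b])
   of the automorphism of (L∩H)/Z(L∩H) induced by conjugation with d *)
Definition conj_matrix (L : Osc -> Prop) (a b d : Osc) (m11 m12 m21 m22 : Z) : Prop :=
  same_class L (osc_mul (osc_mul d a) (osc_inv d))
             (osc_mul (osc_zpow a m11) (osc_zpow b m21)) /\
  same_class L (osc_mul (osc_mul d b) (osc_inv d))
             (osc_mul (osc_zpow a m12) (osc_zpow b m22)).

Definition allowed_matrix (m11 m12 m21 m22 : Z) : Prop :=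
  (m11, m12, m21, m22) = (1, 0, 0, 1)%Z \/
  (m11, m12, m21, m22) = (-1, 0, 0, -1)%Z \/
  (m11, m12, m21, m22) = (0, -1, 1, -1)%Z \/
  (m11, m12, m21, m22) = (0, -1, 1, 0)%Z \/
  (m11, m12, m21, m22) = (1, -1, 1, 0)%Z.

Definition adapted (L : Osc -> Prop) (r : nat) (l : R) (a b c d : Osc) : Prop :=
  generates L a b c d /\
  tc d = l /\
  (forall g, inH L g <-> gen (set3 a b c) g) /\
  in_center_LH L c /\
  osc_mul (osc_mul (osc_mul a b) (osc_inv a)) (osc_inv b) = osc_pow c r /\
  (exists m11 m12 m21 m22 : Z,
      conj_matrix L a b d m11 m12 m21 m22 /\ allowed_matrix m11 m12 m21 m22) /\
  0 < xr a * xim b - xim a * xr b.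

(* The projection of L ∩ H to C is a plane lattice of covolume one.  Rotate a Gauss-reduced
   basis e1, e2 of it so that e1 = 1/√ν; then e2 = (-μ + iν)/√ν with μ + iν in F.  Lifting
   e1, e2 to L ∩ H and adding a central generator gives alpha, beta, gamma; the commutator
   relation of H_1^r(Z) forces gamma = (0, 1/r, 0).  Conjugation by delta rotates the plane
   lattice by λ and preserves it, so the rotated basis has integer coordinates in (e1, e2):
   sin λ = n ν, cos λ ν - sin λ μ = n' ν, ...  For q = 4 and q ∈ {3, 6} these equations and
   the bounds defining F pin μ + iν down, and in every case they give the matrix of the
   automorphism induced by delta. *)

From Pilot Require Import Defs.
From Stdlib Require Import Reals ZArith Lia Lra List.
(* [Reals] exports [Rgeom.xr], which would shadow the coordinate [Defs.xr]. *)
Import Defs.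
Open Scope R_scope.

Lemma osc_eta g : g = mkOsc (xr g) (xim g) (zc g) (tc g).
Proof. destruct g; reflexivity. Qed.

Lemma cos_sin_sq t : cos t ^ 2 + sin t ^ 2 = 1.
Proof. rewrite <- (sin2_cos2 t); unfold Rsqr; ring. Qed.

Lemma eq_mod_unit_circle c s a b X :
  c ^ 2 + s ^ 2 = 1 -> a - b = (c ^ 2 + s ^ 2 - 1) * X -> a = b.
Proof. intros H1 H2; rewrite H1, Rminus_diag, Rmult_0_l in H2; lra. Qed.

Lemma tc_mul g h : tc (osc_mul g h) = tc g + tc h.
Proof. reflexivity. Qed.

Lemma tc_inv g : tc (osc_inv g) = - tc g.
Proof. reflexivity. Qed.

Lemma osc_mul_tc0 g h : tc g = 0 -> osc_mul g h =
  mkOsc (xr g + xr h) (xim g + xim h)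
        (zc g + zc h + / 2 * (xr g * xim h - xim g * xr h)) (tc h).
Proof. intro H; unfold osc_mul; rewrite H, cos_0, sin_0; f_equal; ring. Qed.

Lemma osc_inv_tc0 g : tc g = 0 -> osc_inv g = mkOsc (- xr g) (- xim g) (- zc g) 0.
Proof. intro H; unfold osc_inv; rewrite H, cos_0, sin_0; f_equal; ring. Qed.

Lemma osc_mul_assoc g h k : osc_mul (osc_mul g h) k = osc_mul g (osc_mul h k).
Proof.
  destruct g as [x1 y1 z1 t1], h as [x2 y2 z2 t2], k as [x3 y3 z3 t3].
  unfold osc_mul; simpl; rewrite cos_plus, sin_plus.
  f_equal; try ring.
  apply (eq_mod_unit_circle (cos t1) (sin t1) _ _
    (/ 2 * (x2 * (sin t2 * x3 + cos t2 * y3) - y2 * (cos t2 * x3 - sin t2 * y3))));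
    [apply cos_sin_sq | ring].
Qed.

Lemma osc_mul_inv_l g : osc_mul (osc_inv g) g = osc_id.
Proof.
  destruct g as [x y z t]; unfold osc_mul, osc_inv, osc_id; simpl.
  rewrite cos_neg, sin_neg; pose proof (cos_sin_sq t); f_equal; ring.
Qed.

Lemma osc_mul_id_r g : osc_mul g osc_id = g.
Proof. destruct g; unfold osc_mul, osc_id; simpl; f_equal; ring. Qed.

Lemma osc_mul_inv_cancel_r g d : osc_mul (osc_mul g (osc_inv d)) d = g.
Proof. rewrite osc_mul_assoc, osc_mul_inv_l, osc_mul_id_r; reflexivity. Qed.

Lemma osc_mul_central g h :
  xr g = 0 -> xim g = 0 -> tc g = 0 -> osc_mul g h = osc_mul h g.
Proof.
  destruct g as [x y z t]; simpl; intros -> -> ->.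
  unfold osc_mul; simpl; rewrite cos_0, sin_0; f_equal; ring.
Qed.

Lemma conj_proj g h : tc h = 0 ->
  let k := osc_mul (osc_mul g h) (osc_inv g) in
  xr k = cos (tc g) * xr h - sin (tc g) * xim h /\
  xim k = sin (tc g) * xr h + cos (tc g) * xim h /\ tc k = 0.
Proof.
  destruct g as [x y z t], h as [x' y' z' t']; simpl; intros ->.
  unfold osc_mul, osc_inv; simpl; rewrite Rplus_0_r.
  split; [|split]; [| |ring].
  - apply (eq_mod_unit_circle (cos t) (sin t) _ _ (- x)); [apply cos_sin_sq | ring].
  - apply (eq_mod_unit_circle (cos t) (sin t) _ _ (- y)); [apply cos_sin_sq | ring].
Qed.

Lemma F_S_mul c s g h : in_SO2 c s ->
  F_S c s (osc_mul g h) = osc_mul (F_S c s g) (F_S c s h).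
Proof.
  unfold in_SO2; intro H.
  destruct g as [x1 y1 z1 t1], h as [x2 y2 z2 t2]; unfold F_S, osc_mul; simpl.
  f_equal; try ring.
  apply (eq_mod_unit_circle c s _ _
    (- / 2 * (x1 * (sin t1 * x2 + cos t1 * y2) - y1 * (cos t1 * x2 - sin t1 * y2))));
    [exact H | ring].
Qed.

Lemma F_S_inv c s g : F_S c s (osc_inv g) = osc_inv (F_S c s g).
Proof. destruct g; unfold F_S, osc_inv; simpl; f_equal; ring. Qed.

Lemma F_S_id c s : F_S c s osc_id = osc_id.
Proof. unfold F_S, osc_id; simpl; f_equal; ring. Qed.

Lemma tc_pow g n : tc (osc_pow g n) = INR n * tc g.
Proof.
  induction n as [|n IH]; simpl osc_pow; [simpl; ring|].
  rewrite tc_mul, IH, S_INR; ring.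
Qed.

Lemma tc_zpow g k : tc (osc_zpow g k) = IZR k * tc g.
Proof.
  destruct k as [|p|p]; simpl osc_zpow; [simpl; ring| |];
    rewrite ?tc_inv, tc_pow, INR_IPR; [reflexivity|].
  change (IZR (Zneg p)) with (- IPR p); ring.
Qed.

Lemma osc_pow_tc0 g n : tc g = 0 ->
  osc_pow g n = mkOsc (INR n * xr g) (INR n * xim g) (INR n * zc g) 0.
Proof.
  intro H; induction n as [|n IH]; simpl osc_pow.
  - unfold osc_id; f_equal; simpl; ring.
  - rewrite osc_mul_tc0, IH by exact H; cbn [xr xim zc tc]; rewrite S_INR; f_equal; ring.
Qed.

Lemma osc_zpow_tc0 g k : tc g = 0 ->
  osc_zpow g k = mkOsc (IZR k * xr g) (IZR k * xim g) (IZR k * zc g) 0.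
Proof.
  intro H; destruct k as [|p|p]; simpl osc_zpow.
  - unfold osc_id; f_equal; ring.
  - rewrite osc_pow_tc0, INR_IPR by exact H; reflexivity.
  - rewrite osc_pow_tc0, osc_inv_tc0 by (exact H || reflexivity); cbn [xr xim zc tc].
    rewrite INR_IPR; change (IZR (Zneg p)) with (- IPR p); f_equal; ring.
Qed.

Lemma gen_mono (X Y : Osc -> Prop) g : (forall x, X x -> Y x) -> gen X g -> gen Y g.
Proof.
  intros HXY H; induction H; [constructor | apply gen_base | apply gen_mul | apply gen_inv]; auto.
Qed.

Lemma gen_incl (X L : Osc -> Prop) g : subgroup L -> (forall x, X x -> L x) -> gen X g -> L g.
Proof. intros (H1 & H2 & H3) HX H; induction H; auto. Qed.

Lemma gen_zpow X g k : gen X g -> gen X (osc_zpow g k).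
Proof.
  assert (Hpow : forall n, gen X g -> gen X (osc_pow g n))
    by (induction n; simpl; intros; [constructor | apply gen_mul; auto]).
  intro H; destruct k; simpl; [constructor | | apply gen_inv]; auto.
Qed.

Lemma gen_F_S c s X g : in_SO2 c s -> gen X g ->
  gen (fun y => exists x, X x /\ y = F_S c s x) (F_S c s g).
Proof.
  intros Hc H; induction H.
  - rewrite F_S_id; constructor.
  - apply gen_base; eauto.
  - rewrite F_S_mul by exact Hc; apply gen_mul; auto.
  - rewrite F_S_inv; apply gen_inv; auto.
Qed.

Lemma subgroup_zpow L g k : subgroup L -> L g -> L (osc_zpow g k).
Proof.
  intros HL Hg; apply (gen_incl (fun x => x = g)); [exact HL | intros x ->; exact Hg |].
  apply gen_zpow, gen_base; reflexivity.
Qed.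

Lemma subgroup_inH L : subgroup L -> subgroup (inH L).
Proof.
  intros (H1 & H2 & H3); unfold inH; split; [|split].
  - split; [exact H1 | reflexivity].
  - intros g h [Hg Tg] [Hh Th]; split; auto; rewrite tc_mul, Tg, Th; ring.
  - intros g [Hg Tg]; split; auto; rewrite tc_inv, Tg; ring.
Qed.

Lemma subgroup_image_FS c s L : in_SO2 c s -> subgroup L -> subgroup (image_FS c s L).
Proof.
  intros Hc (H1 & H2 & H3); unfold image_FS; split; [|split].
  - exists osc_id; rewrite F_S_id; auto.
  - intros g h [g' [Hg ->]] [h' [Hh ->]]; exists (osc_mul g' h'); rewrite F_S_mul; auto.
  - intros g [g' [Hg ->]]; exists (osc_inv g'); rewrite F_S_inv; auto.
Qed.

Lemma inH_image_FS c s L a b z : in_SO2 c s -> subgroup L ->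
  (forall g, inH L g <-> gen (set3 a b z) g) ->
  forall g, inH (image_FS c s L) g <-> gen (set3 (F_S c s a) (F_S c s b) (F_S c s z)) g.
Proof.
  intros Hc HL HLH g; split.
  - intros [[h [Hh ->]] Ht].
    assert (Hgen : gen (set3 a b z) h) by (apply HLH; split; auto).
    eapply gen_mono; [| exact (gen_F_S c s _ _ Hc Hgen)].
    intros y [x [Hx ->]]; destruct Hx as [-> | [-> | ->]]; unfold set3; auto.
  - apply gen_incl; [apply subgroup_inH, subgroup_image_FS; auto |].
    assert (HX : forall y, set3 a b z y -> inH (image_FS c s L) (F_S c s y)).
    { intros y Hy; destruct (proj2 (HLH y) (gen_base _ _ Hy)) as [Ly Ty].
      split; [exists y; auto | exact Ty]. }
    intros x [-> | [-> | ->]]; apply HX; unfold set3; auto.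
Qed.

Lemma gen_set3_span a b z : tc a = 0 -> tc b = 0 -> xr z = 0 -> xim z = 0 -> tc z = 0 ->
  forall g, gen (set3 a b z) g ->
  tc g = 0 /\ exists m n : Z,
    xr g = IZR m * xr a + IZR n * xr b /\ xim g = IZR m * xim a + IZR n * xim b.
Proof.
  intros Ta Tb Xz Yz Tz g H;
    induction H as [| x Hx | x y _ [Tx (m & n & Ex & Fx)] _ [Ty (m' & n' & Ey & Fy)]
                    | x _ [Tx (m & n & Ex & Fx)]].
  - split; [reflexivity|]; exists 0%Z, 0%Z; simpl; split; ring.
  - destruct Hx as [-> | [-> | ->]]; (split; [assumption|]).
    + exists 1%Z, 0%Z; simpl; split; ring.
    + exists 0%Z, 1%Z; simpl; split; ring.
    + exists 0%Z, 0%Z; rewrite Xz, Yz; simpl; split; ring.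
  - rewrite osc_mul_tc0 by exact Tx; cbn [xr xim tc]; split; [exact Ty|].
    exists (m + m')%Z, (n + n')%Z; rewrite !plus_IZR, Ex, Fx, Ey, Fy; split; ring.
  - rewrite osc_inv_tc0 by exact Tx; cbn [xr xim tc]; split; [reflexivity|].
    exists (- m)%Z, (- n)%Z; rewrite !opp_IZR, Ex, Fx; split; ring.
Qed.

(** * Rotation angles of finite order *)

Lemma cos_sin_period_Z x k : cos (x + 2 * PI * IZR k) = cos x /\ sin (x + 2 * PI * IZR k) = sin x.
Proof.
  destruct k as [|p|p].
  - rewrite Rmult_0_r, Rplus_0_r; auto.
  - change (IZR (Zpos p)) with (IPR p); rewrite <- INR_IPR.
    replace (x + 2 * PI * INR (Pos.to_nat p)) with (x + 2 * INR (Pos.to_nat p) * PI) by ring.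
    rewrite cos_period, sin_period; auto.
  - change (IZR (Zneg p)) with (- IPR p); rewrite <- INR_IPR.
    pose proof (cos_period (x + 2 * PI * - INR (Pos.to_nat p)) (Pos.to_nat p)) as Hc.
    pose proof (sin_period (x + 2 * PI * - INR (Pos.to_nat p)) (Pos.to_nat p)) as Hs.
    replace (x + 2 * PI * - INR (Pos.to_nat p) + 2 * INR (Pos.to_nat p) * PI) with x in Hc, Hs
      by ring.
    auto.
Qed.

Lemma in_2piZ_sixths n j :
  in_2piZ (INR n * (PI * IZR j / 6)) <-> (exists m, Z.of_nat n * j = 12 * m)%Z.
Proof.
  pose proof PI_RGT_0.
  rewrite INR_IZR_INZ; split; intros [m Hm]; exists m.
  - apply eq_IZR; rewrite !mult_IZR.
    apply (Rmult_eq_reg_l (PI / 6)); [lra | lra].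
  - apply (f_equal IZR) in Hm; rewrite !mult_IZR in Hm.
    replace (IZR (Z.of_nat n) * (PI * IZR j / 6)) with (PI / 6 * (IZR (Z.of_nat n) * IZR j))
      by field.
    rewrite Hm; field.
Qed.

Lemma is_ord_sixths j q : is_ord (PI * IZR j / 6) q ->
  (1 <= q)%nat /\ (exists m, Z.of_nat q * j = 12 * m)%Z /\
  forall q', (1 <= q' < q)%nat -> ~ (exists m, Z.of_nat q' * j = 12 * m)%Z.
Proof.
  intros (Hq1 & Hq2 & Hq3); split; [exact Hq1|]; split.
  - apply in_2piZ_sixths, Hq2.
  - intros q' Hq' Hm; apply (Hq3 q'); try apply in_2piZ_sixths; tauto.
Qed.

Definition angle_of_order (q : nat) (l : R) : Prop :=
  (q = 1%nat /\ cos l = 1 /\ sin l = 0) \/ (q = 2%nat /\ cos l = -1 /\ sin l = 0) \/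
  (q = 3%nat /\ cos l = -1/2 /\ sin l = sqrt 3/2) \/ (q = 4%nat /\ cos l = 0 /\ sin l = 1) \/
  (q = 6%nat /\ cos l = 1/2 /\ sin l = sqrt 3/2).

Lemma ord_multiple_of_PI n q : is_ord (INR n * PI) q -> angle_of_order q (INR n * PI).
Proof.
  intro Hq; unfold angle_of_order.
  replace (INR n * PI) with (PI * IZR (6 * Z.of_nat n) / 6) in Hq
    by (rewrite mult_IZR, <- INR_IZR_INZ; simpl; field).
  destruct (is_ord_sixths _ _ Hq) as (Hq1 & [m Hm] & Hmin).
  destruct (Nat.Even_or_Odd n) as [[h ->] | [h ->]].
  - left; split.
    + destruct (Nat.eq_dec q 1) as [|Hne]; [assumption | exfalso].
      apply (Hmin 1%nat); [lia | exists (Z.of_nat h); lia].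
    + replace (INR (2 * h) * PI) with (0 + 2 * INR h * PI) by (rewrite mult_INR; simpl; ring).
      rewrite cos_period, sin_period, cos_0, sin_0; auto.
  - right; left; split.
    + assert (Hq2 : (q <= 2)%nat).
      { apply Nat.nlt_ge; intro; apply (Hmin 2%nat); [lia | exists (Z.of_nat (2 * h + 1)); lia]. }
      assert (q = 1 \/ q = 2)%nat as [-> | ->] by lia; [lia | reflexivity].
    + replace (INR (2 * h + 1) * PI) with (PI + 2 * INR h * PI)
        by (rewrite plus_INR, mult_INR; simpl; ring).
      rewrite cos_period, sin_period, cos_PI, sin_PI; auto.
Qed.

Lemma ord_sixth_turn l0 k q : l0 = PI / 3 \/ l0 = PI / 2 \/ l0 = 2 * PI / 3 ->
  is_ord (l0 + 2 * PI * IZR k) q -> angle_of_order q (l0 + 2 * PI * IZR k).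
Proof.
  intros Hl0 Hq; unfold angle_of_order.
  rewrite (proj1 (cos_sin_period_Z _ _)), (proj2 (cos_sin_period_Z _ _)).
  destruct Hl0 as [-> | [-> | ->]];
    [ replace (PI / 3 + 2 * PI * IZR k) with (PI * IZR (2 + 12 * k) / 6) in Hq
        by (rewrite plus_IZR, mult_IZR; simpl; field)
    | replace (PI / 2 + 2 * PI * IZR k) with (PI * IZR (3 + 12 * k) / 6) in Hq
        by (rewrite plus_IZR, mult_IZR; simpl; field)
    | replace (2 * PI / 3 + 2 * PI * IZR k) with (PI * IZR (4 + 12 * k) / 6) in Hq
        by (rewrite plus_IZR, mult_IZR; simpl; field) ];
    destruct (is_ord_sixths _ _ Hq) as (Hq1 & [m Hm] & Hmin).
  - assert (Hq6 : (q <= 6)%nat).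
    { apply Nat.nlt_ge; intro; apply (Hmin 6%nat); [lia | exists (1 + 6 * k)%Z; lia]. }
    do 4 right; split; [| rewrite cos_PI3, sin_PI3; auto].
    assert (q = 1 \/ q = 2 \/ q = 3 \/ q = 4 \/ q = 5 \/ q = 6)%nat
      as [-> | [-> | [-> | [-> | [-> | ->]]]]] by lia; lia.
  - assert (Hq4 : (q <= 4)%nat).
    { apply Nat.nlt_ge; intro; apply (Hmin 4%nat); [lia | exists (1 + 4 * k)%Z; lia]. }
    do 3 right; left; split; [| rewrite cos_PI2, sin_PI2; auto].
    assert (q = 1 \/ q = 2 \/ q = 3 \/ q = 4)%nat as [-> | [-> | [-> | ->]]] by lia; lia.
  - assert (Hq3 : (q <= 3)%nat).
    { apply Nat.nlt_ge; intro; apply (Hmin 3%nat); [lia | exists (1 + 3 * k)%Z; lia]. }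
    do 2 right; left; split.
    + assert (q = 1 \/ q = 2 \/ q = 3)%nat as [-> | [-> | ->]] by lia; lia.
    + replace (2 * PI / 3) with (2 * (PI / 3)) by field.
      rewrite cos_2PI3, sin_2PI3; auto.
Qed.

Lemma ord_cases l q : lambda_set l -> is_ord l q -> angle_of_order q l.
Proof.
  intros [[n [_ ->]] | (l0 & k & Hl0 & ->)]; [apply ord_multiple_of_PI | apply ord_sixth_turn, Hl0].
Qed.

(** * Gauss reduction of unimodular plane lattices *)

Lemma exists_min_list {A} (f : A -> R) (a : A) (l : list A) :
  exists m, In m (a :: l) /\ forall y, In y (a :: l) -> f m <= f y.
Proof.
  revert a; induction l as [|b l IH]; intro a.
  - exists a; split; [left; reflexivity | intros y [<- | []]; lra].
  - destruct (IH b) as (m & Hm & Hmin); destruct (Rle_dec (f a) (f m)).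
    + exists a; split; [left; reflexivity|].
      intros y [<- | Hy]; [lra | specialize (Hmin y Hy); lra].
    + exists m; split; [right; exact Hm|]; intros y [<- | Hy]; [lra | auto].
Qed.

Definition zrange (N : Z) : list Z :=
  map (fun n => (Z.of_nat n - N)%Z) (seq 0 (Z.to_nat (2 * N + 1))).

Lemma in_zrange a N : (- N <= a <= N)%Z -> In a (zrange N).
Proof.
  intro H; apply in_map_iff; exists (Z.to_nat (a + N)); split.
  - rewrite Z2Nat.id by lia; lia.
  - apply in_seq; lia.
Qed.

Lemma cross_sq_le x1 y1 x2 y2 : (x1 * y2 - y1 * x2) ^ 2 <= (x1 ^ 2 + y1 ^ 2) * (x2 ^ 2 + y2 ^ 2).
Proof.
  replace ((x1 ^ 2 + y1 ^ 2) * (x2 ^ 2 + y2 ^ 2))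
    with ((x1 * y2 - y1 * x2) ^ 2 + (x1 * x2 + y1 * y2) ^ 2) by ring.
  pose proof (pow2_ge_0 (x1 * x2 + y1 * y2)); lra.
Qed.

Lemma exists_size_reduction t : exists K : Z, - / 2 <= t + IZR K < / 2.
Proof.
  exists (- Zfloor (t + / 2))%Z; rewrite opp_IZR.
  pose proof (Zfloor_bound (t + / 2)); lra.
Qed.

(* [mu + i nu = -k/p + i/p] is the point of the upper half plane attached to a basis of
   determinant one, with [p] the squared length of the first vector and [k] the scalar product. *)
Definition reduced_basis (x1 y1 x2 y2 : R) : Prop :=
  x1 * y2 - y1 * x2 = 1 /\
  in_F (- ((x1 * x2 + y1 * y2) / (x1 ^ 2 + y1 ^ 2))) (/ (x1 ^ 2 + y1 ^ 2)).

Lemma in_F_of_size_reduced p k q2 : 0 < p -> p * q2 = k ^ 2 + 1 -> p <= q2 ->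
  - / 2 <= k / p < / 2 -> (0 < k / p -> p < q2) -> in_F (- (k / p)) (/ p).
Proof.
  intros Hp Hl Hq Hb Hs.
  assert (E : (- (k / p)) ^ 2 + (/ p) ^ 2 = 1 + (q2 - p) / p).
  { apply (Rmult_eq_reg_l (p * p)); [| nra].
    replace (p * p * ((- (k / p)) ^ 2 + (/ p) ^ 2)) with (k ^ 2 + 1) by (field; lra).
    rewrite <- Hl; field; lra. }
  assert (Hi : 0 < / p) by (apply Rinv_0_lt_compat; lra).
  assert (Hd : 0 <= (q2 - p) / p) by (apply Rmult_le_pos; lra).
  unfold in_F; rewrite E; destruct (Rle_dec (k / p) 0).
  - left; lra.
  - right; assert (0 < (q2 - p) / p) by (apply Rdiv_lt_0_compat; lra); lra.
Qed.

(* A size-reduced basis whose first vector is a shortest one is reduced, up to the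
   exchange [(e1, e2) -> (e2, -e1)] needed on the boundary [|e1| = |e2|]. *)
Lemma reduced_basis_or_swap x1 y1 x2 y2 :
  x1 * y2 - y1 * x2 = 1 -> x1 ^ 2 + y1 ^ 2 <= x2 ^ 2 + y2 ^ 2 ->
  - / 2 <= (x1 * x2 + y1 * y2) / (x1 ^ 2 + y1 ^ 2) < / 2 ->
  reduced_basis x1 y1 x2 y2 \/ reduced_basis x2 y2 (- x1) (- y1).
Proof.
  intros Hdet Hle Hb.
  set (p := x1 ^ 2 + y1 ^ 2) in *; set (q2 := x2 ^ 2 + y2 ^ 2) in *;
    set (k := x1 * x2 + y1 * y2) in *.
  assert (Hlag : p * q2 = k ^ 2 + 1).
  { transitivity (k ^ 2 + (x1 * y2 - y1 * x2) ^ 2); [unfold p, q2, k; ring | rewrite Hdet; ring]. }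
  assert (Hp : 0 < p).
  { destruct (Rle_lt_or_eq_dec 0 p) as [|Hp0]; [unfold p; nra | assumption |].
    rewrite <- Hp0 in Hlag; nra. }
  destruct (Rlt_dec p q2) as [Hlt | Hnlt]; [| destruct (Rle_dec (k / p) 0) as [Hle0 | Hgt0]].
  - left; split; [exact Hdet | apply (in_F_of_size_reduced p k q2); auto].
  - left; split; [exact Hdet | apply (in_F_of_size_reduced p k q2); auto; lra].
  - right; assert (Hpq : q2 = p) by lra.
    split; [lra |].
    replace (x2 * - x1 + y2 * - y1) with (- k) by (unfold k; ring); fold q2.
    assert (Hk : - k / q2 = - (k / p)) by (rewrite Hpq; field; lra).
    apply (in_F_of_size_reduced q2 (- k) p); rewrite ?Hk; lra.
Qed.

Definition zcomb (a b : Z) (x y : R) : R := IZR a * x + IZR b * y.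

Lemma zcomb_det a b c d x1 x2 y1 y2 :
  zcomb a b x1 y1 * zcomb c d x2 y2 - zcomb a b x2 y2 * zcomb c d x1 y1 =
  IZR (a * d - c * b) * (x1 * y2 - x2 * y1).
Proof. unfold zcomb; rewrite minus_IZR, !mult_IZR; ring. Qed.

Lemma unit_sign x : x ^ 2 = 1 -> exists e : Z, IZR e = x /\ (e = 1 \/ e = -1)%Z.
Proof.
  intro H; destruct (Rmult_integral (x - 1) (x + 1)) as [H1 | H1];
    [nra | exists 1%Z | exists (-1)%Z]; split; auto; simpl; lra.
Qed.

Lemma rotate_reduced_basis x1 y1 x2 y2 : reduced_basis x1 y1 x2 y2 ->
  exists c s mu nu, in_SO2 c s /\ in_F mu nu /\
    c * x1 - s * y1 = / sqrt nu /\ s * x1 + c * y1 = 0 /\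
    c * x2 - s * y2 = - mu / sqrt nu /\ s * x2 + c * y2 = sqrt nu.
Proof.
  intros [Hdet HF].
  assert (Hp : 0 < x1 ^ 2 + y1 ^ 2).
  { destruct (Rle_lt_or_eq_dec 0 (x1 ^ 2 + y1 ^ 2)) as [| Hp0]; [nra | assumption |].
    assert (x1 = 0) by nra; assert (y1 = 0) by nra; subst; lra. }
  exists (x1 / sqrt (x1 ^ 2 + y1 ^ 2)), (- y1 / sqrt (x1 ^ 2 + y1 ^ 2)),
         (- ((x1 * x2 + y1 * y2) / (x1 ^ 2 + y1 ^ 2))), (/ (x1 ^ 2 + y1 ^ 2)).
  split; [| split; [exact HF |]]; rewrite ?sqrt_inv;
  pose proof (sqrt_lt_R0 _ Hp) as HS; pose proof (sqrt_sqrt _ (Rlt_le _ _ Hp)) as HS2;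
  set (S := sqrt (x1 ^ 2 + y1 ^ 2)) in *; clearbody S.
  - unfold in_SO2; transitivity ((x1 ^ 2 + y1 ^ 2) / (S * S)); [field | rewrite HS2; field]; lra.
  - repeat split.
    + transitivity ((x1 ^ 2 + y1 ^ 2) / S); [field | rewrite <- HS2; field]; lra.
    + field; lra.
    + transitivity ((x1 * x2 + y1 * y2) / S); [field | rewrite <- HS2; field]; lra.
    + transitivity ((x1 * y2 - y1 * x2) / S); [field | rewrite Hdet; field]; lra.
Qed.

Section GaussReduction.

Variables u1 u2 v1 v2 : R.
Hypothesis Hunimod : (u1 * v2 - u2 * v1) ^ 2 = 1.

Let sqnorm (a b : Z) := zcomb a b u1 v1 ^ 2 + zcomb a b u2 v2 ^ 2.

Lemma sqnorm_bounds_coeffs a b B : sqnorm a b <= B ->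
  IZR a ^ 2 <= B * (v1 ^ 2 + v2 ^ 2) /\ IZR b ^ 2 <= B * (u1 ^ 2 + u2 ^ 2).
Proof.
  unfold sqnorm; intro H.
  pose proof (cross_sq_le (zcomb a b u1 v1) (zcomb a b u2 v2) v1 v2) as L1.
  pose proof (cross_sq_le u1 u2 (zcomb a b u1 v1) (zcomb a b u2 v2)) as L2.
  replace ((zcomb a b u1 v1 * v2 - zcomb a b u2 v2 * v1) ^ 2)
    with (IZR a ^ 2 * (u1 * v2 - u2 * v1) ^ 2) in L1 by (unfold zcomb; ring).
  replace ((u1 * zcomb a b u2 v2 - u2 * zcomb a b u1 v1) ^ 2)
    with (IZR b ^ 2 * (u1 * v2 - u2 * v1) ^ 2) in L2 by (unfold zcomb; ring).
  rewrite Hunimod in L1, L2.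
  pose proof (pow2_ge_0 v1); pose proof (pow2_ge_0 v2);
    pose proof (pow2_ge_0 u1); pose proof (pow2_ge_0 u2); split; nra.
Qed.

Lemma sqnorm_pos a b : (a <> 0 \/ b <> 0)%Z -> 0 < sqnorm a b.
Proof.
  intro Hnz; destruct (Rlt_or_le 0 (sqnorm a b)) as [| Hle]; [assumption | exfalso].
  destruct (sqnorm_bounds_coeffs a b 0 Hle) as [Ha Hb].
  destruct Hnz as [Hnz | Hnz]; apply Hnz, eq_IZR; nra.
Qed.

Lemma exists_shortest : exists a b : Z, (a <> 0 \/ b <> 0)%Z /\
  forall a' b', (a' <> 0 \/ b' <> 0)%Z -> sqnorm a b <= sqnorm a' b'.
Proof.
  set (B := u1 ^ 2 + u2 ^ 2); set (N := up (B * (B + (v1 ^ 2 + v2 ^ 2)))).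
  assert (HB : 0 <= B) by (unfold B; pose proof (pow2_ge_0 u1); pose proof (pow2_ge_0 u2); lra).
  assert (Hv : 0 <= v1 ^ 2 + v2 ^ 2) by (pose proof (pow2_ge_0 v1); pose proof (pow2_ge_0 v2); lra).
  assert (HN : B * (B + (v1 ^ 2 + v2 ^ 2)) < IZR N) by apply archimed.
  assert (HB1 : sqnorm 1 0 = B) by (unfold sqnorm, zcomb, B; simpl; ring).
  assert (HBdef : u1 ^ 2 + u2 ^ 2 = B) by reflexivity.
  clearbody B N.
  assert (Hbox : forall a b, sqnorm a b <= B -> In (a, b) (list_prod (zrange N) (zrange N))).
  { intros a b Hq; destruct (sqnorm_bounds_coeffs a b B Hq) as [Ha Hb]; rewrite HBdef in Hb.
    assert (Ha' : IZR (a * a) < IZR N) by (rewrite mult_IZR; nra).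
    assert (Hb' : IZR (b * b) < IZR N) by (rewrite mult_IZR; nra).
    apply lt_IZR in Ha'; apply lt_IZR in Hb'.
    apply in_prod; apply in_zrange; nia. }
  set (nonzero := fun x : Z * Z => negb ((fst x =? 0)%Z && (snd x =? 0)%Z)).
  assert (Hnonzero : forall a b, nonzero (a, b) = true <-> (a <> 0 \/ b <> 0)%Z).
  { intros a b; unfold nonzero; simpl.
    destruct (Z.eqb_spec a 0), (Z.eqb_spec b 0); simpl; split; intro; try lia; congruence. }
  destruct (exists_min_list (fun x => sqnorm (fst x) (snd x)) (1%Z, 0%Z)
              (filter nonzero (list_prod (zrange N) (zrange N)))) as ([a b] & Hm & Hmin).
  assert (Hm1 : sqnorm a b <= B) by (rewrite <- HB1; apply (Hmin (1%Z, 0%Z)); left; reflexivity).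
  exists a, b; split.
  - destruct Hm as [[= <- <-] | Hm]; [lia |].
    apply filter_In in Hm; apply Hnonzero, Hm.
  - intros a' b' Hnz; destruct (Rle_dec (sqnorm a' b') B) as [Hle | Hgt]; [| lra].
    apply (Hmin (a', b')); right; apply filter_In; split; [apply Hbox, Hle | apply Hnonzero, Hnz].
Qed.

Lemma shortest_completes a b : (a <> 0 \/ b <> 0)%Z ->
  (forall a' b', (a' <> 0 \/ b' <> 0)%Z -> sqnorm a b <= sqnorm a' b') ->
  exists c d : Z, (a * d - c * b = 1)%Z.
Proof.
  intros Hnz Hmin.
  assert (Hg : Z.gcd a b = 1%Z).
  { destruct (Z.gcd_divide_l a b) as [a' Ha'], (Z.gcd_divide_r a b) as [b' Hb'].
    pose proof (Z.gcd_nonneg a b); set (g := Z.gcd a b) in *.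
    assert (Hg0 : g <> 0%Z) by (intro Hz; rewrite Hz in Ha', Hb'; lia).
    destruct (Z.eq_dec g 1) as [|Hg1]; [assumption | exfalso].
    assert (Hnz' : (a' <> 0 \/ b' <> 0)%Z)
      by (destruct Hnz as [Ha | Hb]; [left | right]; intro Hz; rewrite Hz in *; lia).
    assert (Hsc : sqnorm a b = IZR g ^ 2 * sqnorm a' b')
      by (unfold sqnorm, zcomb; rewrite Ha', Hb', !mult_IZR; ring).
    assert (H2 : 2 <= IZR g) by (apply IZR_le; lia).
    pose proof (Hmin a' b' Hnz') as Hle; pose proof (sqnorm_pos a' b' Hnz') as Hpos.
    rewrite Hsc in Hle; revert Hle Hpos; generalize (sqnorm a' b'); intros.
    assert (4 <= IZR g ^ 2) by nra; nra. }
  destruct (Z.gcd_bezout a b 1 Hg) as (x & y & Hxy).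
  exists (- y)%Z, x; lia.
Qed.

Lemma gauss_reduction : exists a1 b1 a2 b2 : Z,
  (a1 * b2 - a2 * b1 = 1 \/ a1 * b2 - a2 * b1 = -1)%Z /\
  reduced_basis (zcomb a1 b1 u1 v1) (zcomb a1 b1 u2 v2) (zcomb a2 b2 u1 v1) (zcomb a2 b2 u2 v2).
Proof.
  destruct exists_shortest as (a & b & Hnz & Hmin).
  destruct (shortest_completes a b Hnz Hmin) as (c & d & Hcd).
  destruct (unit_sign _ Hunimod) as (sg & Hsg & Hsg1).
  pose proof (sqnorm_pos a b Hnz) as Hp.
  set (x1 := zcomb a b u1 v1) in *; set (y1 := zcomb a b u2 v2) in *.
  assert (Hp' : 0 < x1 ^ 2 + y1 ^ 2) by exact Hp.
  set (t := (x1 * zcomb (sg * c) (sg * d) u1 v1 + y1 * zcomb (sg * c) (sg * d) u2 v2)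
            / (x1 ^ 2 + y1 ^ 2)).
  destruct (exists_size_reduction t) as [K HK].
  set (a2 := (sg * c + K * a)%Z); set (b2 := (sg * d + K * b)%Z).
  assert (Hab2 : (a * b2 - a2 * b = sg)%Z) by (unfold a2, b2; nia).
  assert (Hdet : x1 * zcomb a2 b2 u2 v2 - y1 * zcomb a2 b2 u1 v1 = 1).
  { unfold x1, y1; rewrite zcomb_det, Hab2, Hsg; lra. }
  assert (Hle : x1 ^ 2 + y1 ^ 2 <= zcomb a2 b2 u1 v1 ^ 2 + zcomb a2 b2 u2 v2 ^ 2)
    by (apply (Hmin a2 b2); lia).
  assert (Hsize : (x1 * zcomb a2 b2 u1 v1 + y1 * zcomb a2 b2 u2 v2) / (x1 ^ 2 + y1 ^ 2)
                  = t + IZR K).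
  { unfold t, a2, b2, x1, y1, zcomb in *; rewrite !plus_IZR, !mult_IZR; field; lra. }
  rewrite <- Hsize in HK.
  destruct (reduced_basis_or_swap _ _ _ _ Hdet Hle HK) as [Hred | Hred].
  - exists a, b, a2, b2; split; [lia | exact Hred].
  - exists a2, b2, (- a)%Z, (- b)%Z; split; [lia |].
    unfold zcomb at 3 4; rewrite !opp_IZR.
    replace (- IZR a * u1 + - IZR b * v1) with (- x1) by (unfold x1, zcomb; ring).
    replace (- IZR a * u2 + - IZR b * v2) with (- y1) by (unfold y1, zcomb; ring).
    exact Hred.
Qed.

End GaussReduction.

(** * Coordinates on L ∩ H *)

Lemma Z_additive_linear (f : Z -> R) :
  (forall a b, f (a + b)%Z = f a + f b) -> forall a, f a = IZR a * f 1%Z.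
Proof.
  intro H; assert (H0 : f 0%Z = 0) by (pose proof (H 0%Z 0%Z); simpl in *; lra).
  apply Z.peano_ind.
  - rewrite H0; simpl; ring.
  - intros k Hk; rewrite <- Z.add_1_r, H, Hk, plus_IZR; simpl; ring.
  - intros k Hk; pose proof (H (Z.pred k) 1%Z) as E.
    rewrite Z.add_1_r, Z.succ_pred, Hk in E.
    rewrite <- Z.sub_1_r in E |- *; rewrite minus_IZR in *; simpl in *; lra.
Qed.

Section HeisenbergChart.

Variables (L : Osc -> Prop) (r : nat) (phi : Z * Z * Z -> Osc).
Hypothesis Hr : (0 < r)%nat.
Hypothesis Hhom : forall x y, phi (heis_mul (Z.of_nat r) x y) = osc_mul (phi x) (phi y).
Hypothesis Hrange : forall g, inH L g <-> exists x, phi x = g.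

Local Notation u1 := (xr (phi (1%Z, 0%Z, 0%Z))).
Local Notation u2 := (xim (phi (1%Z, 0%Z, 0%Z))).
Local Notation v1 := (xr (phi (0%Z, 1%Z, 0%Z))).
Local Notation v2 := (xim (phi (0%Z, 1%Z, 0%Z))).

Lemma phi_inH x : inH L (phi x).
Proof. apply Hrange; eauto. Qed.

Lemma tc_phi x : tc (phi x) = 0.
Proof. apply phi_inH. Qed.

Lemma phi_mul a b c a' b' c' :
  phi ((a + a')%Z, (b + b')%Z, (c + c' + Z.of_nat r * a * b')%Z) =
  osc_mul (phi (a, b, c)) (phi (a', b', c')).
Proof. apply (Hhom (a, b, c) (a', b', c')). Qed.

Lemma phi_eq a b c a' b' c' : a = a' -> b = b' -> c = c' -> phi (a, b, c) = phi (a', b', c').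
Proof. intros -> -> ->; reflexivity. Qed.

Lemma phi_zero : phi (0%Z, 0%Z, 0%Z) = osc_id.
Proof.
  set (g := phi (0%Z, 0%Z, 0%Z)).
  assert (H : g = osc_mul g g) by (unfold g; rewrite <- phi_mul; apply phi_eq; ring).
  rewrite osc_mul_tc0 in H by apply tc_phi.
  assert (E1 := f_equal xr H); assert (E2 := f_equal xim H); assert (E3 := f_equal zc H).
  simpl in E1, E2, E3.
  assert (Tg : tc g = 0) by apply tc_phi.
  rewrite (osc_eta g), Tg; unfold osc_id; f_equal; nra.
Qed.

Lemma phi_inv a b c :
  phi ((- a)%Z, (- b)%Z, (- c + Z.of_nat r * a * b)%Z) = osc_inv (phi (a, b, c)).
Proof.
  set (g := phi (a, b, c)); set (h := phi ((- a)%Z, (- b)%Z, (- c + Z.of_nat r * a * b)%Z)).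
  assert (H : osc_mul g h = osc_id)
    by (unfold g, h; rewrite <- phi_mul, <- phi_zero; apply phi_eq; ring).
  rewrite osc_mul_tc0 in H by apply tc_phi; rewrite osc_inv_tc0 by apply tc_phi.
  assert (E1 := f_equal xr H); assert (E2 := f_equal xim H); assert (E3 := f_equal zc H).
  simpl in E1, E2, E3.
  assert (Ex : xr h = - xr g) by lra; assert (Ey : xim h = - xim g) by lra.
  rewrite Ex, Ey in E3.
  assert (Th : tc h = 0) by apply tc_phi.
  rewrite (osc_eta h), Ex, Ey, Th; f_equal; lra.
Qed.

Section AdditiveProjection.

Variable pr : Osc -> R.
Hypothesis Hpr : forall g h, tc g = 0 -> pr (osc_mul g h) = pr g + pr h.

Lemma pr_phi_split a b c a' b' c' a'' b'' c'' :
  (a'' = a + a')%Z -> (b'' = b + b')%Z -> (c'' = c + c' + Z.of_nat r * a * b')%Z ->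
  pr (phi (a'', b'', c'')) = pr (phi (a, b, c)) + pr (phi (a', b', c')).
Proof. intros -> -> ->; rewrite phi_mul; apply Hpr, tc_phi. Qed.

Lemma pr_phi_axis_linear :
  (forall a, pr (phi (a, 0%Z, 0%Z)) = IZR a * pr (phi (1%Z, 0%Z, 0%Z))) /\
  (forall b, pr (phi (0%Z, b, 0%Z)) = IZR b * pr (phi (0%Z, 1%Z, 0%Z))) /\
  (forall c, pr (phi (0%Z, 0%Z, c)) = IZR c * pr (phi (0%Z, 0%Z, 1%Z))).
Proof.
  split; [| split];
    [ apply (Z_additive_linear (fun a => pr (phi (a, 0%Z, 0%Z))))
    | apply (Z_additive_linear (fun b => pr (phi (0%Z, b, 0%Z))))
    | apply (Z_additive_linear (fun c => pr (phi (0%Z, 0%Z, c)))) ];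
    intros; apply pr_phi_split; ring.
Qed.

(* [pr] kills the commutator [phi (0, 0, r)] of [phi (1, 0, 0)] and [phi (0, 1, 0)],
   hence the whole centre. *)
Lemma pr_phi_center c : pr (phi (0%Z, 0%Z, c)) = 0.
Proof.
  destruct pr_phi_axis_linear as (_ & _ & HC); rewrite HC.
  assert (E1 : pr (phi (1%Z, 1%Z, Z.of_nat r)) =
               pr (phi (1%Z, 0%Z, 0%Z)) + pr (phi (0%Z, 1%Z, 0%Z))) by (apply pr_phi_split; ring).
  assert (E2 : pr (phi (1%Z, 1%Z, Z.of_nat r)) =
               pr (phi (1%Z, 1%Z, 0%Z)) + pr (phi (0%Z, 0%Z, Z.of_nat r)))
    by (apply pr_phi_split; ring).
  assert (E3 : pr (phi (1%Z, 1%Z, 0%Z)) =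
               pr (phi (0%Z, 1%Z, 0%Z)) + pr (phi (1%Z, 0%Z, 0%Z))) by (apply pr_phi_split; ring).
  assert (Hr' : 0 < IZR (Z.of_nat r)) by (rewrite <- INR_IZR_INZ; apply lt_0_INR, Hr).
  assert (Hcomm : IZR (Z.of_nat r) * pr (phi (0%Z, 0%Z, 1%Z)) = 0) by (rewrite <- HC; lra).
  apply Rmult_integral in Hcomm as [Hz | Hz]; [lra | rewrite Hz; ring].
Qed.

Lemma pr_phi_linear a b c :
  pr (phi (a, b, c)) = IZR a * pr (phi (1%Z, 0%Z, 0%Z)) + IZR b * pr (phi (0%Z, 1%Z, 0%Z)).
Proof.
  destruct pr_phi_axis_linear as (HA & HB & _).
  rewrite (pr_phi_split a 0%Z 0%Z 0%Z b (c - Z.of_nat r * a * b)%Z a b c) by ring.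
  rewrite (pr_phi_split 0%Z b 0%Z 0%Z 0%Z (c - Z.of_nat r * a * b)%Z 0%Z b) by ring.
  rewrite HA, HB, pr_phi_center; ring.
Qed.

End AdditiveProjection.

Lemma xr_phi a b c : xr (phi (a, b, c)) = zcomb a b u1 v1.
Proof. apply pr_phi_linear; intros g h Hg; rewrite osc_mul_tc0 by exact Hg; reflexivity. Qed.

Lemma xim_phi a b c : xim (phi (a, b, c)) = zcomb a b u2 v2.
Proof. apply pr_phi_linear; intros g h Hg; rewrite osc_mul_tc0 by exact Hg; reflexivity. Qed.

Lemma proj_phi_center c : xr (phi (0%Z, 0%Z, c)) = 0 /\ xim (phi (0%Z, 0%Z, c)) = 0.
Proof. rewrite xr_phi, xim_phi; unfold zcomb; split; ring. Qed.

Lemma zc_phi_center c : zc (phi (0%Z, 0%Z, c)) = IZR c * zc (phi (0%Z, 0%Z, 1%Z)).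
Proof.
  apply (Z_additive_linear (fun c => zc (phi (0%Z, 0%Z, c)))); intros a b.
  rewrite (phi_eq 0 0 (a + b) (0 + 0) (0 + 0) (a + b + Z.of_nat r * 0 * 0)) by ring.
  rewrite phi_mul, osc_mul_tc0 by apply tc_phi; cbn [zc].
  rewrite (proj1 (proj_phi_center a)), (proj2 (proj_phi_center a)); ring.
Qed.

Lemma phi_commutator : INR r * zc (phi (0%Z, 0%Z, 1%Z)) = u1 * v2 - u2 * v1.
Proof.
  assert (E1 : phi (1%Z, 1%Z, Z.of_nat r) = osc_mul (phi (1%Z, 0%Z, 0%Z)) (phi (0%Z, 1%Z, 0%Z)))
    by (rewrite <- phi_mul; apply phi_eq; ring).
  assert (E2 : phi (1%Z, 1%Z, Z.of_nat r) =
               osc_mul (phi (1%Z, 1%Z, 0%Z)) (phi (0%Z, 0%Z, Z.of_nat r)))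
    by (rewrite <- phi_mul; apply phi_eq; ring).
  assert (E3 : phi (1%Z, 1%Z, 0%Z) = osc_mul (phi (0%Z, 1%Z, 0%Z)) (phi (1%Z, 0%Z, 0%Z)))
    by (rewrite <- phi_mul; apply phi_eq; ring).
  rewrite osc_mul_tc0 in E1, E2, E3 by apply tc_phi.
  apply (f_equal zc) in E1; apply (f_equal zc) in E2; apply (f_equal zc) in E3; simpl in E1, E2, E3.
  rewrite zc_phi_center, E3, (proj1 (proj_phi_center _)), (proj2 (proj_phi_center _)) in E2.
  rewrite <- INR_IZR_INZ in E2; lra.
Qed.

Lemma proj_inH_lattice w1 w2 :
  (exists g, inH L g /\ xr g = w1 /\ xim g = w2) <->
  exists a b : Z, w1 = zcomb a b u1 v1 /\ w2 = zcomb a b u2 v2.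
Proof.
  split.
  - intros (g & Hg & <- & <-); apply Hrange in Hg as [[[a b] c] <-].
    exists a, b; rewrite xr_phi, xim_phi; auto.
  - intros (a & b & -> & ->); exists (phi (a, b, 0%Z)); rewrite xr_phi, xim_phi; auto using phi_inH.
Qed.

(* Two bases of the same plane lattice differ by a matrix in GL_2(Z), so their
   determinants agree up to sign. *)
Lemma phi_unimodular : normalised L -> (u1 * v2 - u2 * v1) ^ 2 = 1.
Proof.
  intros (p1 & p2 & q1 & q2 & Hiff & Hdet).
  assert (Hlat : forall w1 w2, (exists m n : Z, w1 = zcomb m n p1 q1 /\ w2 = zcomb m n p2 q2) <->
                               (exists a b : Z, w1 = zcomb a b u1 v1 /\ w2 = zcomb a b u2 v2))
    by (intros; rewrite <- proj_inH_lattice; symmetry; apply Hiff).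
  destruct (proj1 (Hlat p1 p2)) as (a & b & Hp1 & Hp2).
  { exists 1%Z, 0%Z; unfold zcomb; simpl; split; ring. }
  destruct (proj1 (Hlat q1 q2)) as (a' & b' & Hq1 & Hq2).
  { exists 0%Z, 1%Z; unfold zcomb; simpl; split; ring. }
  destruct (proj2 (Hlat u1 u2)) as (m1 & n1 & Hu1 & Hu2).
  { exists 1%Z, 0%Z; unfold zcomb; simpl; split; ring. }
  destruct (proj2 (Hlat v1 v2)) as (m2 & n2 & Hv1 & Hv2).
  { exists 0%Z, 1%Z; unfold zcomb; simpl; split; ring. }
  set (d := p1 * q2 - p2 * q1) in *; set (w := u1 * v2 - u2 * v1).
  assert (Ed : d = IZR (a * b' - a' * b) * w)
    by (unfold d, w; rewrite Hp1, Hp2, Hq1, Hq2, zcomb_det; ring).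
  assert (Ew : w = IZR (m1 * n2 - m2 * n1) * d)
    by (unfold w, d; rewrite Hu1, Hu2, Hv1, Hv2, zcomb_det; ring).
  assert (Hd2 : d ^ 2 = 1) by (rewrite <- (pow2_abs d), Hdet; ring).
  assert (HM : ((m1 * n2 - m2 * n1) * (a * b' - a' * b) = 1)%Z).
  { apply eq_IZR; rewrite mult_IZR; apply (Rmult_eq_reg_r w); [| intro Hw; rewrite Hw in Ed; nra].
    rewrite Ed in Ew; lra. }
  apply Z.eq_mul_1 in HM; rewrite Ew, Rpow_mult_distr, Hd2.
  destruct HM as [-> | ->]; simpl; ring.
Qed.

Section GeneratedImages.

Variable X : Osc -> Prop.

Lemma gen_phi_eq a b c a' b' c' :
  gen X (phi (a, b, c)) -> a = a' -> b = b' -> c = c' -> gen X (phi (a', b', c')).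
Proof. intros H -> -> ->; exact H. Qed.

Lemma gen_phi_mul a b c a' b' c' : gen X (phi (a, b, c)) -> gen X (phi (a', b', c')) ->
  gen X (phi ((a + a')%Z, (b + b')%Z, (c + c' + Z.of_nat r * a * b')%Z)).
Proof. rewrite phi_mul; apply gen_mul. Qed.

Lemma gen_phi_inv a b c : gen X (phi (a, b, c)) ->
  gen X (phi ((- a)%Z, (- b)%Z, (- c + Z.of_nat r * a * b)%Z)).
Proof. rewrite phi_inv; apply gen_inv. Qed.

Lemma gen_phi_multiple a b c : gen X (phi (a, b, c)) ->
  forall j, exists c', gen X (phi ((j * a)%Z, (j * b)%Z, c')).
Proof.
  intro H; apply Z.peano_ind.
  - exists 0%Z; simpl; rewrite phi_zero; constructor.
  - intros k [ck Hk]; eexists; apply (gen_phi_eq _ _ _ _ _ _ (gen_phi_mul _ _ _ _ _ _ Hk H));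
      unfold Z.succ; [ring | ring | reflexivity].
  - intros k [ck Hk]; eexists;
      apply (gen_phi_eq _ _ _ _ _ _ (gen_phi_mul _ _ _ _ _ _ Hk (gen_phi_inv _ _ _ H)));
      unfold Z.pred; [ring | ring | reflexivity].
Qed.

Lemma gen_phi_center eps : (eps = 1 \/ eps = -1)%Z -> gen X (phi (0%Z, 0%Z, eps)) ->
  forall c, gen X (phi (0%Z, 0%Z, c)).
Proof.
  intros Heps G.
  assert (Hk : forall k, gen X (phi (0%Z, 0%Z, (k * eps)%Z))).
  { apply Z.peano_ind.
    - simpl; rewrite phi_zero; constructor.
    - intros k Hk; apply (gen_phi_eq _ _ _ _ _ _ (gen_phi_mul _ _ _ _ _ _ Hk G));
        unfold Z.succ; ring.
    - intros k Hk;
        apply (gen_phi_eq _ _ _ _ _ _ (gen_phi_mul _ _ _ _ _ _ Hk (gen_phi_inv _ _ _ G)));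
        unfold Z.pred; ring. }
  intro c; apply (gen_phi_eq _ _ _ _ _ _ (Hk (c * eps)%Z)); [reflexivity | reflexivity |].
  destruct Heps as [-> | ->]; ring.
Qed.

Lemma gen_phi_shift a b c c' : (forall k, gen X (phi (0%Z, 0%Z, k))) ->
  gen X (phi (a, b, c)) -> gen X (phi (a, b, c')).
Proof.
  intros HC H; apply (gen_phi_eq _ _ _ _ _ _ (gen_phi_mul _ _ _ _ _ _ H (HC (c' - c)%Z))); ring.
Qed.

End GeneratedImages.

(* With [e = ±1] the determinant,
   [(a, b) = e (a b2 - b a2) (a1, b1) + e (b a1 - a b1) (a2, b2)]. *)
Lemma phi_gen_all X a1 b1 a2 b2 eps :
  (a1 * b2 - a2 * b1 = 1 \/ a1 * b2 - a2 * b1 = -1)%Z -> (eps = 1 \/ eps = -1)%Z ->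
  gen X (phi (a1, b1, 0%Z)) -> gen X (phi (a2, b2, 0%Z)) -> gen X (phi (0%Z, 0%Z, eps)) ->
  forall x, gen X (phi x).
Proof.
  intros Hunim Heps G1 G2 G3 [[a b] c].
  set (e := (a1 * b2 - a2 * b1)%Z).
  assert (He2 : (e * e = 1)%Z) by (unfold e; destruct Hunim as [-> | ->]; reflexivity).
  destruct (gen_phi_multiple X _ _ _ G1 (e * (a * b2 - b * a2))) as [c1 H1].
  destruct (gen_phi_multiple X _ _ _ G2 (e * (b * a1 - a * b1))) as [c2 H2].
  eapply (gen_phi_shift X a b _ c (gen_phi_center X eps Heps G3)).
  apply (gen_phi_eq X _ _ _ _ _ _ (gen_phi_mul X _ _ _ _ _ _ H1 H2)); [| | reflexivity].
  - transitivity (e * e * a)%Z; [unfold e; ring | rewrite He2; ring].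
  - transitivity (e * e * b)%Z; [unfold e; ring | rewrite He2; ring].
Qed.

Lemma inH_gen_basis a1 b1 a2 b2 eps : subgroup L ->
  (a1 * b2 - a2 * b1 = 1 \/ a1 * b2 - a2 * b1 = -1)%Z -> (eps = 1 \/ eps = -1)%Z ->
  forall g, inH L g <-> gen (set3 (phi (a1, b1, 0%Z)) (phi (a2, b2, 0%Z)) (phi (0%Z, 0%Z, eps))) g.
Proof.
  intros HL Hunim Heps g; split.
  - intro Hg; apply Hrange in Hg as [x <-].
    apply (phi_gen_all _ a1 b1 a2 b2 eps Hunim Heps); apply gen_base; unfold set3; auto.
  - apply gen_incl; [apply subgroup_inH, HL |].
    intros x [-> | [-> | ->]]; apply phi_inH.
Qed.

Lemma normal_form : subgroup L -> normalised L ->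
  exists c s za zb mu nu : R, in_SO2 c s /\ in_F mu nu /\
  forall g, inH (image_FS c s L) g <->
    gen (set3 (mkOsc (/ sqrt nu) 0 za 0) (mkOsc (- mu / sqrt nu) (sqrt nu) zb 0)
              (mkOsc 0 0 (/ INR r) 0)) g.
Proof.
  intros HL Hn; pose proof (phi_unimodular Hn) as Hunim.
  destruct (gauss_reduction u1 u2 v1 v2 Hunim) as (a1 & b1 & a2 & b2 & Hdet & Hred).
  destruct (rotate_reduced_basis _ _ _ _ Hred) as (c & s & mu & nu & HSO & HF & E1 & E2 & E3 & E4).
  destruct (unit_sign _ Hunim) as (eps & Heps & Heps1).
  exists c, s, (zc (phi (a1, b1, 0%Z))), (zc (phi (a2, b2, 0%Z))), mu, nu.
  split; [exact HSO | split; [exact HF |]].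
  assert (Hr' : 0 < INR r) by (apply lt_0_INR, Hr).
  assert (Hgamma : zc (phi (0%Z, 0%Z, eps)) = / INR r).
  { rewrite zc_phi_center; apply (Rmult_eq_reg_l (INR r)); [| lra].
    replace (INR r * (IZR eps * zc (phi (0%Z, 0%Z, 1%Z))))
      with (IZR eps * (INR r * zc (phi (0%Z, 0%Z, 1%Z)))) by ring.
    rewrite phi_commutator, <- Heps; field_simplify; [| lra].
    destruct Heps1 as [-> | ->]; simpl; lra. }
  replace (mkOsc (/ sqrt nu) 0 (zc (phi (a1, b1, 0%Z))) 0) with (F_S c s (phi (a1, b1, 0%Z)))
    by (unfold F_S; rewrite xr_phi, xim_phi, tc_phi, E1, E2; reflexivity).
  replace (mkOsc (- mu / sqrt nu) (sqrt nu) (zc (phi (a2, b2, 0%Z))) 0)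
    with (F_S c s (phi (a2, b2, 0%Z)))
    by (unfold F_S; rewrite xr_phi, xim_phi, tc_phi, E3, E4; reflexivity).
  replace (mkOsc 0 0 (/ INR r) 0) with (F_S c s (phi (0%Z, 0%Z, eps)))
    by (unfold F_S; rewrite xr_phi, xim_phi, tc_phi, Hgamma; unfold zcomb; f_equal; ring).
  apply inH_image_FS; [exact HSO | exact HL |].
  apply inH_gen_basis; assumption.
Qed.

End HeisenbergChart.

(** * Adapted generators *)

Lemma in_F_bounds mu nu : in_F mu nu -> 0 < nu /\ - / 2 <= mu <= / 2 /\ 1 <= mu ^ 2 + nu ^ 2.
Proof. intros [(? & ? & ?) | (? & ? & ?)]; lra. Qed.

Lemma IZR_eq_one_of_sq (n : Z) : 0 < IZR n -> IZR n ^ 2 < 4 -> n = 1%Z.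
Proof.
  intros H1 H2; apply lt_IZR in H1.
  destruct (Z.eq_dec n 1) as [| Hn]; [assumption | exfalso].
  assert (H2' : 2 <= IZR n) by (apply IZR_le; lia); nra.
Qed.

Lemma in_F_sin_one mu nu (n n' : Z) : in_F mu nu ->
  1 = IZR n * nu -> - mu = IZR n' * nu -> mu = 0 /\ nu = 1.
Proof.
  intros HF H1 H2; destruct (in_F_bounds _ _ HF) as (Hnu & Hmu & Hnorm).
  assert (Hn : n = 1%Z) by (apply IZR_eq_one_of_sq; nra).
  rewrite Hn in H1; simpl in H1; assert (Hnu1 : nu = 1) by lra; subst nu.
  assert (Hn' : n' = 0%Z).
  { apply eq_IZR; destruct (Z.eq_dec n' 0) as [-> | Hne]; [reflexivity | exfalso].
    destruct (Z_lt_le_dec n' 0) as [Hlt | Hle].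
    - assert (IZR n' <= -1) by (apply IZR_le; lia); lra.
    - assert (1 <= IZR n') by (apply IZR_le; lia); lra. }
  rewrite Hn' in H2; split; lra.
Qed.

Lemma in_F_sin_sqrt3 mu nu (n : Z) : in_F mu nu ->
  sqrt 3 / 2 = IZR n * nu -> mu = / 2 /\ nu = sqrt 3 / 2.
Proof.
  intros HF H; destruct (in_F_bounds _ _ HF) as (Hnu & Hmu & Hnorm).
  assert (H3 : sqrt 3 * sqrt 3 = 3) by (apply sqrt_sqrt; lra).
  assert (H3' : 0 < sqrt 3) by (apply sqrt_lt_R0; lra).
  assert (Hn : n = 1%Z) by (apply IZR_eq_one_of_sq; nra).
  rewrite Hn in H; simpl in H; assert (Hnu3 : nu = sqrt 3 / 2) by lra.
  split; [| exact Hnu3].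
  assert (Hmu2 : mu ^ 2 = / 4) by (rewrite Hnu3 in Hnorm; nra).
  destruct HF as [(_ & ? & _) | (_ & ? & _)]; nra.
Qed.

Lemma osc_zpow_mul_proj a b m n : tc a = 0 -> tc b = 0 ->
  let g := osc_mul (osc_zpow a m) (osc_zpow b n) in
  xr g = IZR m * xr a + IZR n * xr b /\ xim g = IZR m * xim a + IZR n * xim b /\ tc g = 0.
Proof.
  intros Ta Tb; cbv zeta.
  rewrite osc_mul_tc0 by (rewrite tc_zpow, Ta; ring).
  rewrite !osc_zpow_tc0 by assumption; cbn [xr xim tc]; repeat split; ring.
Qed.

Lemma same_class_of_proj L x y : subgroup L -> L x -> L y -> tc x = 0 -> tc y = 0 ->
  xr x = xr y -> xim x = xim y -> same_class L x y.
Proof.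
  intros (H1 & H2 & H3) Hx Hy Tx Ty E1 E2.
  assert (Te : tc (osc_mul (osc_inv y) x) = 0) by (rewrite tc_mul, tc_inv, Tx, Ty; ring).
  assert (Hz : xr (osc_mul (osc_inv y) x) = 0 /\ xim (osc_mul (osc_inv y) x) = 0)
    by (rewrite osc_mul_tc0, osc_inv_tc0 by (rewrite ?tc_inv, ?Ty; auto; ring); simpl; lra).
  split; [split; auto | intros h _; apply osc_mul_central; tauto].
Qed.

Lemma generates_of_inH_gen M a b c d : subgroup M ->
  (forall g, inH M g <-> gen (set3 a b c) g) ->
  (forall g, M g -> exists k : Z, tc g = IZR k * tc d) -> M d ->
  generates M a b c d.
Proof.
  intros HM HH Hproj Hd g; split.
  - intro Hg; destruct (Hproj g Hg) as [k Hk].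
    assert (Hr : inH M (osc_mul g (osc_inv (osc_zpow d k)))).
    { split; [apply HM; [exact Hg | apply HM, subgroup_zpow; assumption] |].
      rewrite tc_mul, tc_inv, tc_zpow, Hk; ring. }
    apply HH in Hr; rewrite <- (osc_mul_inv_cancel_r g (osc_zpow d k)).
    apply gen_mul; [| apply gen_zpow, gen_base; unfold set4; auto].
    eapply gen_mono; [| exact Hr]; intros x [-> | [-> | ->]]; unfold set4; auto.
  - assert (Hin : forall x, set3 a b c x -> M x)
      by (intros x Hx; apply (proj2 (HH x) (gen_base _ _ Hx))).
    apply gen_incl; [exact HM |].
    intros x [-> | [-> | [-> | ->]]]; auto; apply Hin; unfold set3; auto.
Qed.

Section AdaptedGenerators.

Variables (M : Osc -> Prop) (r : nat) (za zb mu nu : R).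
Hypothesis HM : subgroup M.
Hypothesis Hr : (0 < r)%nat.
Hypothesis HF : in_F mu nu.

Local Notation alpha := (mkOsc (/ sqrt nu) 0 za 0).
Local Notation beta := (mkOsc (- mu / sqrt nu) (sqrt nu) zb 0).
Local Notation gamma := (mkOsc 0 0 (/ INR r) 0).

Hypothesis HH : forall g, inH M g <-> gen (set3 alpha beta gamma) g.

Lemma sqrt_nu_facts : 0 < sqrt nu /\ sqrt nu * sqrt nu = nu.
Proof.
  destruct (in_F_bounds _ _ HF) as [Hnu _].
  split; [apply sqrt_lt_R0 | apply sqrt_sqrt]; lra.
Qed.

Lemma generators_in_M : M alpha /\ M beta /\ M gamma.
Proof. repeat split; apply (proj2 (HH _)), gen_base; unfold set3; auto. Qed.

Lemma inH_coords g : inH M g ->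
  exists m n : Z, xr g * sqrt nu = IZR m - IZR n * mu /\ xim g * sqrt nu = IZR n * nu.
Proof.
  intro Hg; destruct sqrt_nu_facts as [HS HS2].
  destruct (gen_set3_span alpha beta gamma eq_refl eq_refl eq_refl eq_refl eq_refl g
              (proj1 (HH g) Hg))
    as (_ & m & n & Ex & Ey).
  exists m, n; rewrite Ex, Ey; simpl; set (S := sqrt nu) in *; clearbody S.
  split; [field | rewrite <- HS2; ring]; lra.
Qed.

(* Conjugation by [d] rotates the projection of [M ∩ H] by [tc d]; the equations are the
   coordinates of the rotated projections of [alpha] and [beta] in the basis formed by these
   projections, multiplied by [sqrt nu]. *)
Lemma conj_coeffs d : M d -> exists m11 m12 m21 m22 : Z,
  cos (tc d) = IZR m11 - IZR m21 * mu /\ sin (tc d) = IZR m21 * nu /\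
  - cos (tc d) * mu - sin (tc d) * nu = IZR m12 - IZR m22 * mu /\
  cos (tc d) * nu - sin (tc d) * mu = IZR m22 * nu.
Proof.
  intro Hd; destruct sqrt_nu_facts as [HS HS2]; destruct generators_in_M as (Ha & Hb & _).
  assert (Hconj : forall X, M X -> tc X = 0 -> inH M (osc_mul (osc_mul d X) (osc_inv d))).
  { intros X HX TX; destruct HM as (_ & Hmul & Hinv).
    split; [apply Hmul; [apply Hmul | apply Hinv]; assumption | apply (conj_proj d X TX)]. }
  destruct (inH_coords _ (Hconj _ Ha eq_refl)) as (m11 & m21 & E1 & E2).
  destruct (inH_coords _ (Hconj _ Hb eq_refl)) as (m12 & m22 & E3 & E4).
  destruct (conj_proj d alpha eq_refl) as (Xa & Ya & _).
  destruct (conj_proj d beta eq_refl) as (Xb & Yb & _).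
  rewrite Xa in E1; rewrite Ya in E2; rewrite Xb in E3; rewrite Yb in E4; simpl in *.
  set (S := sqrt nu) in *; clearbody S.
  exists m11, m12, m21, m22; repeat split.
  - rewrite <- E1; field; lra.
  - rewrite <- E2; field; lra.
  - rewrite <- E3, <- HS2; field; lra.
  - rewrite <- E4, <- HS2; field; lra.
Qed.

Lemma conj_matrix_of_coeffs d m11 m12 m21 m22 : M d ->
  cos (tc d) = IZR m11 - IZR m21 * mu -> sin (tc d) = IZR m21 * nu ->
  - cos (tc d) * mu - sin (tc d) * nu = IZR m12 - IZR m22 * mu ->
  cos (tc d) * nu - sin (tc d) * mu = IZR m22 * nu ->
  conj_matrix M alpha beta d m11 m12 m21 m22.
Proof.
  intros Hd E1 E2 E3 E4; destruct sqrt_nu_facts as [HS HS2].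
  destruct generators_in_M as (Ha & Hb & _); pose proof HM as (_ & Hmul & Hinv).
  assert (Hcl : forall X m n, M X -> tc X = 0 ->
    xr (osc_mul (osc_mul d X) (osc_inv d)) = IZR m * xr alpha + IZR n * xr beta ->
    xim (osc_mul (osc_mul d X) (osc_inv d)) = IZR m * xim alpha + IZR n * xim beta ->
    same_class M (osc_mul (osc_mul d X) (osc_inv d))
                 (osc_mul (osc_zpow alpha m) (osc_zpow beta n))).
  { intros X m n HX TX Ex Ey.
    destruct (osc_zpow_mul_proj alpha beta m n eq_refl eq_refl) as (Px & Py & Pt).
    apply same_class_of_proj; [exact HM | | | apply (conj_proj d X TX) | exact Pt | |].
    - apply Hmul; [apply Hmul | apply Hinv]; assumption.
    - apply Hmul; apply subgroup_zpow; assumption.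
    - rewrite Px; exact Ex.
    - rewrite Py; exact Ey. }
  destruct (conj_proj d alpha eq_refl) as (Xa & Ya & _).
  destruct (conj_proj d beta eq_refl) as (Xb & Yb & _).
  split; apply Hcl; auto; [rewrite Xa | rewrite Ya | rewrite Xb | rewrite Yb]; simpl;
    set (S := sqrt nu) in *; clearbody S.
  - rewrite E1; field; lra.
  - rewrite E2, <- HS2; field; lra.
  - transitivity ((- cos (tc d) * mu - sin (tc d) * nu) / S);
      [rewrite <- HS2 | rewrite E3]; field; lra.
  - transitivity ((cos (tc d) * nu - sin (tc d) * mu) / S);
      [rewrite <- HS2 | rewrite E4, <- HS2]; field; lra.
Qed.

Lemma rotation_sin_one d : M d -> sin (tc d) = 1 -> cos (tc d) = 0 -> mu = 0 /\ nu = 1.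
Proof.
  intros Hd Hs Hc; destruct (conj_coeffs d Hd) as (m11 & m12 & m21 & m22 & _ & E2 & _ & E4).
  rewrite Hs, Hc in *; apply (in_F_sin_one mu nu m21 m22 HF); lra.
Qed.

Lemma rotation_sin_sqrt3 d : M d -> sin (tc d) = sqrt 3 / 2 -> mu = / 2 /\ nu = sqrt 3 / 2.
Proof.
  intros Hd Hs; destruct (conj_coeffs d Hd) as (m11 & m12 & m21 & m22 & _ & E2 & _).
  rewrite Hs in E2; exact (in_F_sin_sqrt3 mu nu m21 HF E2).
Qed.

Lemma conj_matrix_allowed d q : M d -> angle_of_order q (tc d) ->
  exists m11 m12 m21 m22 : Z,
    conj_matrix M alpha beta d m11 m12 m21 m22 /\ allowed_matrix m11 m12 m21 m22.
Proof.
  intros Hd Hang; unfold allowed_matrix.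
  assert (H3 : sqrt 3 * sqrt 3 = 3) by (apply sqrt_sqrt; lra).
  destruct Hang
    as [(_ & Hc & Hs) | [(_ & Hc & Hs) | [(_ & Hc & Hs) | [(_ & Hc & Hs) | (_ & Hc & Hs)]]]].
  - exists 1%Z, 0%Z, 0%Z, 1%Z;
      split; [apply conj_matrix_of_coeffs; auto; rewrite ?Hc, ?Hs; simpl; ring | auto].
  - exists (-1)%Z, 0%Z, 0%Z, (-1)%Z;
      split; [apply conj_matrix_of_coeffs; auto; rewrite ?Hc, ?Hs; simpl; ring | auto].
  - destruct (rotation_sin_sqrt3 d Hd Hs) as [Hmu Hnu].
    exists 0%Z, (-1)%Z, 1%Z, (-1)%Z;
      split; [apply conj_matrix_of_coeffs; auto; rewrite ?Hc, ?Hs, ?Hmu, ?Hnu; simpl; nra | auto].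
  - destruct (rotation_sin_one d Hd Hs Hc) as [Hmu Hnu].
    exists 0%Z, (-1)%Z, 1%Z, 0%Z;
      split; [apply conj_matrix_of_coeffs; auto; rewrite ?Hc, ?Hs, ?Hmu, ?Hnu; simpl; ring |].
    auto 6.
  - destruct (rotation_sin_sqrt3 d Hd Hs) as [Hmu Hnu].
    exists 1%Z, (-1)%Z, 1%Z, 0%Z;
      split; [apply conj_matrix_of_coeffs; auto; rewrite ?Hc, ?Hs, ?Hmu, ?Hnu; simpl; nra | auto 6].
Qed.

Lemma alpha_beta_commutator :
  osc_mul (osc_mul (osc_mul alpha beta) (osc_inv alpha)) (osc_inv beta) = osc_pow gamma r.
Proof.
  destruct sqrt_nu_facts as [HS _]; assert (Hr' : 0 < INR r) by (apply lt_0_INR, Hr).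
  rewrite osc_pow_tc0 by reflexivity; unfold osc_mul, osc_inv; cbn [xr xim zc tc].
  rewrite !Rplus_0_l, Ropp_0, !Rplus_0_l, cos_0, sin_0; f_equal; field; lra.
Qed.

Lemma gamma_center : in_center_LH M gamma.
Proof.
  split; [split; [apply generators_in_M | reflexivity] |].
  intros h _; apply osc_mul_central; reflexivity.
Qed.

Lemma adapted_generators l q d : (forall g, M g -> exists k : Z, tc g = IZR k * l) ->
  angle_of_order q l -> M d -> tc d = l -> adapted M r l alpha beta gamma d.
Proof.
  intros Hproj Hang Hd Htd; subst l.
  split; [apply generates_of_inH_gen; assumption |].
  split; [reflexivity |]; split; [exact HH |]; split; [exact gamma_center |].
  split; [exact alpha_beta_commutator |]; split; [exact (conj_matrix_allowed d q Hd Hang) |].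
  destruct sqrt_nu_facts as [HS _]; simpl; rewrite Rmult_0_l, Rminus_0_r, Rinv_l; lra.
Qed.

End AdaptedGenerators.

Theorem lemma4p17 (L : Osc -> Prop) (r : nat) (l : R) (q : nat)
  (HL : lattice L) (Hn : normalised L)
  (Hr : heis_type L r) (Hl : lambda_of L l) (Hq : is_ord l q) :
  exists c s : R, in_SO2 c s /\
  exists za zb mu nu : R, in_F mu nu /\
    let alpha := mkOsc (/ sqrt nu) 0 za 0 in
    let beta := mkOsc (- mu / sqrt nu) (sqrt nu) zb 0 in
    let gamma := mkOsc 0 0 (/ INR r) 0 in
    (exists delta, generates (image_FS c s L) alpha beta gamma delta) /\
    (q = 4%nat -> mu = 0 /\ nu = 1) /\
    ((q = 3%nat \/ q = 6%nat) -> mu = / 2 /\ nu = sqrt 3 / 2) /\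
    (forall delta, image_FS c s L delta -> tc delta = l ->
       adapted (image_FS c s L) r l alpha beta gamma delta).
Proof.
  destruct HL as [HL _]; destruct Hr as [Hr (phi & Hhom & _ & Hrange)].
  destruct Hl as [Hlset Hproj].
  destruct (normal_form L r phi Hr Hhom Hrange HL Hn)
    as (c & s & za & zb & mu & nu & HSO & HF & HH).
  pose proof (subgroup_image_FS c s L HSO HL) as HM.
  assert (HprojM : forall g, image_FS c s L g -> exists k : Z, tc g = IZR k * l)
    by (intros g [h [Hh ->]]; apply Hproj; exists h; auto).
  pose proof (ord_cases l q Hlset Hq) as Hang.
  destruct (proj2 (Hproj l)) as (d & Hd & <-); [exists 1%Z; ring |].
  assert (HdM : image_FS c s L (F_S c s d)) by (exists d; auto).
  exists c, s; split; [exact HSO |]; exists za, zb, mu, nu; split; [exact HF |]; cbv zeta.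
  split; [| split; [| split]].
  - exists (F_S c s d); exact (generates_of_inH_gen _ _ _ _ (F_S c s d) HM HH HprojM HdM).
  - intros ->; destruct Hang as [(? & _) | [(? & _) | [(? & _) | [(_ & Hc & Hs) | (? & _)]]]];
      try discriminate; exact (rotation_sin_one _ _ za zb mu nu HM HF HH _ HdM Hs Hc).
  - intros Hq36; destruct Hang as [(? & _) | [(? & _) | [(_ & _ & Hs) | [(? & _) | (_ & _ & Hs)]]]];
      try (destruct Hq36; subst; discriminate);
      exact (rotation_sin_sqrt3 _ _ za zb mu nu HM HF HH _ HdM Hs).
  - intros delta; exact (adapted_generators _ _ za zb mu nu HM Hr HF HH _ q delta HprojM Hang).
Qed.
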